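(* If $w$ is an almost periodic infinite word over a finite alphabet $A$ and $H$ is a finite graph with loops allowed on vertex set $A$, then $\mathcal{P}(w,H)$ is a minimal hereditary property above the Bell number.
   Context: Graphs in classes are finite, simple and loopless; a property (class) is a set of graphs closed under isomorphism, hereditary if closed under induced subgraphs. The speed $\mathcal{X}_n$ is the number of graphs in $\mathcal{X}$ on vertex set $\{1,\dots,n\}$. A hereditary property is above the Bell number if $\mathcal{X}_n\ge n^{(1-o(1))n}$ (equivalently its speed is at least the Bell number $B_n$); it is a minimal property above the Bell number if it is above the Bell number and no proper hereditary subclass is above the Bell number. A word over $A$ is a map $w:S\to A$ with $S=\{1,\dots,n\}$ or $S=\mathbb{N}$, $w_i=w(i)$. A finite word $f$ is a factor of $w$ if for some $s\ge0$, $f_i=w_{i+s}$ for $1\le i\le|f|$. An infinite word $w$ is almost periodic if for every factor $f$ of $w$ there is $k_f$ such that every factor of $w$ of length at least $k_f$ contains $f$ as a factor. For $H$ with loops allowed on $A$ and positive integers $u_1<\dots<u_m$, $G_{w,H}(u_1,\dots,u_m)$ is the graph on $\{u_1,\dots,u_m\}$ where $u_iu_j$ is an edge iff either $|u_i-u_j|=1$ and $w_{u_i}w_{u_j}\notin E(H)$, or $|u_i-u_j|>1$ and $w_{u_i}w_{u_j}\in E(H)$ (equal letters $a$: this refers to a loop at $a$). $\mathcal{P}(w,H)$ is the class of all graphs isomorphic to some $G_{w,H}(u_1,\dots,u_m)$. *)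

From mathcomp Require Import all_boot all_fingroup.
From mathcomp Require Import boolp.
From Stdlib Require Import Reals.

Set Implicit Arguments.
Unset Strict Implicit.
Unset Printing Implicit Defensive.

Definition graph (n : nat) := {ffun 'I_n -> {ffun 'I_n -> bool}}.

Definition simple n (g : graph n) : Prop :=
  forall i j : 'I_n, g i j = g j i /\ g i i = false.

(* the graph induced (pulled back) along f : 'I_m -> 'I_n; for injective f this
   is the induced subgraph on the image of f, relabelled by f *)
Definition induced m n (f : 'I_m -> 'I_n) (g : graph n) : graph m :=
  [ffun i => [ffun j => g (f i) (f j)]].

Definition gclass := forall n : nat, graph n -> Prop.

Definition is_property (X : gclass) : Prop :=
  (forall n (g : graph n), X n g -> simple g) /\
  (forall n (s : {perm 'I_n}) (g : graph n), X n g -> X n (induced s g)).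

Definition hereditary (X : gclass) : Prop :=
  is_property X /\
  (forall m n (f : 'I_m -> 'I_n) (g : graph n),
      injective f -> X n g -> X m (induced f g)).

Definition speed (X : gclass) (n : nat) : nat :=
  #|[set g : graph n | `[< X n g >]]|.

Definition above_bell (X : gclass) : Prop :=
  forall eps : R, (0 < eps)%R ->
    exists N : nat, forall n : nat, (N <= n)%N ->
      (Rpower (INR n) ((1 - eps) * INR n) <= INR (speed X n))%R.

Definition subclass (Y X : gclass) : Prop := forall n (g : graph n), Y n g -> X n g.

Definition minimal_above_bell (X : gclass) : Prop :=
  hereditary X /\ above_bell X /\
  (forall Y : gclass, hereditary Y -> subclass Y X -> above_bell Y ->
     subclass X Y).

(* An infinite word is w : nat -> A, with letters w_1, w_2, ... ;
   the value w 0 is never used. *)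

Definition factor (A : Type) (w : nat -> A) (f : seq A) : Prop :=
  exists s : nat, f = mkseq (fun i => w (i.+1 + s)) (size f).

Definition almost_periodic (A : eqType) (w : nat -> A) : Prop :=
  forall f, factor w f ->
    exists k : nat, forall g, factor w g -> (k <= size g)%N -> infix f g.

(* G_{w,H}(u_1,...,u_m), vertex i of 'I_m standing for u_i *)
Definition GwH (A : Type) (w : nat -> A) (H : rel A) m (u : 'I_m -> nat) : graph m :=
  [ffun i => [ffun j =>
     (i != j) &&
     (if (u i == (u j).+1) || (u j == (u i).+1)
      then ~~ H (w (u i)) (w (u j))
      else H (w (u i)) (w (u j)))]].

Definition Pclass (A : Type) (w : nat -> A) (H : rel A) : gclass :=
  fun n g => exists u : 'I_n -> nat,
    (forall i, (0 < u i)%N) /\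
    (forall i j : 'I_n, (i < j)%N -> (u i < u j)%N) /\
    exists s : {perm 'I_n}, g = induced s (GwH w H u).

From Stdlib Require Import Reals Lra.
From mathcomp Require Import all_boot all_fingroup boolp zify.

Set Implicit Arguments.
Unset Strict Implicit.
Unset Printing Implicit Defensive.

(* Heredity is immediate once P(w,H) is described by injective labellings.
   Growth: by almost periodicity some window length k is such that every window
   of length k contains the prefix w_1 ... w_(L+2).  Put L+2 columns of m vertices
   on the occurrences of that prefix in m disjoint windows, the rows of
   consecutive columns being matched by arbitrary permutations; this yields
   (m!)^(L+1) distinct graphs on (L+2)m vertices, i.e. n^((1-o(1))n) of them.
   Minimality: if a hereditary Y inside P(w,H) misses some G_{w,H}(u0), then no
   labelling of a graph of Y has a run of consecutive integers long enough to
   contain a window, since that window holds a translate of u0.  A graph with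
   runs shorter than K is determined by its letters, the offsets inside runs and
   the run-start map, which has at least n/K values; so Y has at most
   C^n n^(n - n/K) graphs on n vertices, which is below the Bell number. *)

Definition imagep n (x : 'I_n -> nat) : pred nat := [pred q | [exists i, x i == q]].

Section Pclass.
Variables (A : Type) (w : nat -> A) (H : rel A).

Lemma induced_GwH m n (f : 'I_m -> 'I_n) (x : 'I_n -> nat) :
  injective f -> induced f (GwH w H x) = GwH w H (x \o f).
Proof.
move=> f_inj; apply/ffunP => i; apply/ffunP => j.
by rewrite !ffunE /= (inj_eq f_inj).
Qed.

Lemma GwH_shift m (u : 'I_m -> nat) d :
  (forall i, w (d + u i) = w (u i)) -> GwH w H (fun i => d + u i) = GwH w H u.
Proof.
move=> w_shift; apply/ffunP => i; apply/ffunP => j; rewrite !ffunE !w_shift.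
by rewrite -!addnS !eqn_add2l.
Qed.

Lemma GwH_sub_image m n (u : 'I_m -> nat) (x : 'I_n -> nat) :
  injective u -> (forall i, imagep x (u i)) ->
  exists f : 'I_m -> 'I_n, injective f /\ GwH w H u = induced f (GwH w H x).
Proof.
move=> u_inj u_in; have [f xf] := choice (fun i => (existsP (u_in i))).
have f_inj : injective f by move=> i j /(congr1 x); rewrite !(eqP (xf _)) => /u_inj.
exists f; split; rewrite // induced_GwH //.
by congr GwH; apply: funext => i; rewrite /= (eqP (xf i)).
Qed.

Definition nat_rank n (x : 'I_n -> nat) (i : 'I_n) : nat := #|[set j | x j < x i]|.

Lemma nat_rank_lt n (x : 'I_n -> nat) i : nat_rank x i < n.
Proof.
rewrite -[X in _ < X]card_ord -cardsT; apply: proper_card; apply/properP.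
by split; [exact: subsetT | exists i; rewrite ?inE ?ltnn].
Qed.

Lemma nat_rank_mono n (x : 'I_n -> nat) i j : x i < x j -> nat_rank x i < nat_rank x j.
Proof.
move=> lt_ij; apply: proper_card; apply/properP; split.
  by apply/subsetP => k; rewrite !inE => /ltn_trans; apply.
by exists i; rewrite ?inE ?ltnn.
Qed.

Lemma sort_labelling n (x : 'I_n -> nat) : injective x ->
  exists s : {perm 'I_n}, forall i j : 'I_n, i < j -> x ((s^-1)%g i) < x ((s^-1)%g j).
Proof.
move=> x_inj; pose r i := Ordinal (nat_rank_lt x i).
have r_inj : injective r.
  move=> i j /(congr1 val) /= e; apply: x_inj.
  by case: (ltngtP (x i) (x j)) => // /nat_rank_mono; rewrite e ltnn.
have sE k : nat_rank x k = perm r_inj k by rewrite permE.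
exists (perm r_inj) => i j lt_ij.
case: (ltngtP (x ((perm r_inj)^-1 i)) (x ((perm r_inj)^-1 j)))%g => // h.
  by have := nat_rank_mono h; rewrite !sE !permKV ltnNge ltnW.
by move/x_inj/(congr1 (perm r_inj)): h lt_ij; rewrite !permKV => ->; rewrite ltnn.
Qed.

Lemma PclassP n (g : graph n) :
  Pclass w H g <->
  exists x : 'I_n -> nat, [/\ injective x, forall i, 0 < x i & g = GwH w H x].
Proof.
split.
  case=> u [u_pos [u_incr [s ->]]]; exists (u \o s); split => //.
  - move=> i j /= e; apply: (@perm_inj _ s); apply/val_inj/eqP.
    by case: (ltngtP (s i) (s j)) => // /u_incr; rewrite e ltnn.
  - by move=> i; apply: u_pos.
  - by rewrite induced_GwH //; apply: perm_inj.
case=> x [x_inj x_pos ->]; have [s s_incr] := sort_labelling x_inj.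
exists (x \o s^-1)%g; split=> [i|]; first exact: x_pos.
split; first exact: s_incr.
exists s; rewrite induced_GwH; last exact: perm_inj.
by congr GwH; apply: funext => i /=; rewrite permK.
Qed.

Lemma GwH_simple n (x : 'I_n -> nat) : symmetric H -> simple (GwH w H x).
Proof. by move=> H_sym i j; rewrite !ffunE eqxx eq_sym orbC H_sym. Qed.

Lemma Pclass_hereditary : symmetric H -> hereditary (Pclass w H).
Proof.
have Pclass_induced m n (f : 'I_m -> 'I_n) g :
    injective f -> Pclass w H g -> Pclass w H (induced f g).
  move=> f_inj /PclassP [x [x_inj x_pos ->]]; apply/PclassP.
  exists (x \o f); split=> [i j /x_inj /f_inj //|i|]; first exact: x_pos.
  exact: induced_GwH.
move=> H_sym; split; first split.
- by move=> n g /PclassP [x [_ _ ->]]; apply: GwH_simple.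
- by move=> n s g; apply: Pclass_induced; apply: perm_inj.
- exact: Pclass_induced.
Qed.

(* A new vertex far to the right of all others can always be added. *)
Lemma leq_speed_PclassS n : speed (Pclass w H) n <= speed (Pclass w H) n.+1.
Proof.
pose wid := widen_ord (leqnSn n).
apply: (leq_trans _ (leq_imset_card (induced wid) _)).
apply: subset_leq_card; apply/subsetP => g; rewrite inE => /asboolP.
case/PclassP => x [x_inj x_pos ->].
pose far := (\max_(j < n) x j).+1.
pose x' (i : 'I_n.+1) := oapp x far (insub (val i)).
have x'_wid j : x' (wid j) = x j by rewrite /x' /= valK.
have x'_last (i : 'I_n.+1) : n <= i -> x' i = far by move=> le_ni; rewrite /x' insubF // ltnNge le_ni.
have x'_cases (i : 'I_n.+1) : (exists2 j, i = wid j & x' i = x j) \/ (i = n :> nat /\ x' i = far).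
  case: (ltnP i n) => [lt_in|le_ni]; last first.
    by right; split; [apply/eqP; rewrite eqn_leq le_ni andbT -ltnS | exact: x'_last].
  by left; exists (Ordinal lt_in); [apply: val_inj | rewrite -x'_wid; congr x'; apply: val_inj].
have lt_far j : x j < far by rewrite ltnS leq_bigmax.
apply/imsetP; exists (GwH w H x').
  rewrite inE; apply/asboolP/PclassP; exists x'; split=> [i j|i|//].
    case: (x'_cases i) => [[i' -> ->]|[ei ->]]; case: (x'_cases j) => [[j' -> ->]|[ej ->]].
    - by move/x_inj ->.
    - by move=> e; have := lt_far i'; rewrite e ltnn.
    - by move=> e; have := lt_far j'; rewrite e ltnn.
    - by move=> _; apply: val_inj; rewrite /= ei ej.
  by case: (x'_cases i) => [[i' _ ->]|[_ ->]].
rewrite induced_GwH; last by move=> i j /(congr1 val) /= /val_inj.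
by congr GwH; apply: funext => j /=; rewrite x'_wid.
Qed.

End Pclass.

Lemma edivn_uniq d q1 r1 q2 r2 : r1 < d -> r2 < d ->
  q1 * d + r1 = q2 * d + r2 -> q1 = q2 /\ r1 = r2.
Proof.
move=> lt_r1d lt_r2d e; have d_gt0 : 0 < d by apply: leq_ltn_trans lt_r1d.
have eq_q := congr1 (divn^~ d) e; rewrite /= !divnMDl // !divn_small // !addn0 in eq_q.
by split=> //; move: e; rewrite eq_q => /addnI.
Qed.

Section Grid.
Variables (A : Type) (w : nat -> A) (H : rel A) (L k : nat) (a : nat -> nat).
Hypothesis a_fit : forall b, a b + L.+2 <= k.
Hypothesis a_occ : forall b l, l < L.+2 -> w (b * k.+2 + a b + l.+1) = w l.+1.
Variable m : nat.

Definition cell := ('I_L.+2 * 'I_m)%type.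
Definition shuffle := {ffun 'I_L.+1 -> {perm 'I_m}}.

Definition block_of (g : shuffle) (l : nat) (t : 'I_m) : 'I_m :=
  if l is l'.+1 then g (inord l') t else t.

(* Cell (l, t) is put on the copy of the letter w_(l+1) in the window of the
   block [block_of g l t]; positions in distinct blocks are never consecutive. *)
Definition cell_pos (g : shuffle) (v : cell) : nat :=
  let b := val (block_of g v.1 v.2) in b * k.+2 + a b + v.1.+1.

Definition grid_graph (g : shuffle) : graph #|{: cell}| :=
  GwH w H (cell_pos g \o enum_val).

Lemma block_of_inj g l : injective (block_of g l).
Proof. by case: l => [|l] //= t t'; apply: perm_inj. Qed.

Lemma block_of_surj g l t : exists t', block_of g l t' = t.
Proof.
case: l => [|l] /=; first by exists t.
by exists ((g (inord l))^-1 t)%g; rewrite permKV.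
Qed.

Lemma cell_pos_inj g : injective (cell_pos g).
Proof.
move=> [l t] [l' t']; rewrite /cell_pos /= -!addnA.
set b := val (block_of g l t); set b' := val (block_of g l' t').
have r_lt : a b + l.+1 < k.+2 by have := a_fit b; have := ltn_ord l; lia.
have r'_lt : a b' + l'.+1 < k.+2 by have := a_fit b'; have := ltn_ord l'; lia.
case/(edivn_uniq r_lt r'_lt) => eb; rewrite eb => /addnI [] /val_inj el.
by subst l'; congr pair; apply: (block_of_inj (val_inj eb)).
Qed.

Lemma cell_pos_succ g (v v' : cell) :
  (cell_pos g v' == (cell_pos g v).+1) =
  (val v'.1 == (val v.1).+1) && (block_of g v.1 v.2 == block_of g v'.1 v'.2).
Proof.
case: v v' => [l t] [l' t']; rewrite /cell_pos /= -!addnA.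
set b := val (block_of g l t); set b' := val (block_of g l' t').
have r_lt : (a b + l.+1).+1 < k.+2 by have := a_fit b; have := ltn_ord l; lia.
have r'_lt : a b' + l'.+1 < k.+2 by have := a_fit b'; have := ltn_ord l'; lia.
apply/eqP/andP => [|[/eqP el /eqP eb]]; last by rewrite /b /b' eb el; lia.
rewrite -addnS => /esym /(edivn_uniq r_lt r'_lt) [eb er]; rewrite -eb in er.
by split; apply/eqP; [lia | apply: val_inj].
Qed.

Lemma w_cell_pos g (v : cell) : w (cell_pos g v) = w v.1.+1.
Proof. exact: a_occ. Qed.

Lemma grid_graph_next g (l : 'I_L.+1) (t t' : 'I_m) :
  grid_graph g (enum_rank (widen_ord (leqnSn _) l, t)) (enum_rank (lift ord0 l, t')) =
  (block_of g l t == block_of g l.+1 t') (+) H (w l.+1) (w l.+2).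
Proof.
rewrite !ffunE /= !enum_rankK !w_cell_pos (inj_eq enum_rank_inj) !cell_pos_succ /=.
rewrite xpair_eqE /= [_ == lift _ _](_ : _ = false) /=; last first.
  by apply/eqP => /(congr1 val) /=; rewrite /bump /=; lia.
have -> : (l == l.+2 :> nat) = false by lia.
by rewrite eqxx /=; case: (_ == _).
Qed.

(* Reading the grid column by column recovers each permutation [g l]. *)
Lemma grid_graph_inj : injective grid_graph.
Proof.
move=> g g' e.
have same_block (l : 'I_L.+1) t t' :
    (block_of g l t == block_of g l.+1 t') = (block_of g' l t == block_of g' l.+1 t').
  by apply: (@addIb (H (w l.+1) (w l.+2))); rewrite -!grid_graph_next e.
have eq_block l : l < L.+2 -> block_of g l =1 block_of g' l.
  elim: l => [|l IH] lt_l t //.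
  have [t0 t0_def] := block_of_surj g l (block_of g l.+1 t).
  have lt_lL : l < L.+1 by lia.
  have := same_block (Ordinal lt_lL) t0 t; rewrite /= t0_def eqxx => /esym /eqP <-.
  by rewrite -[g (inord l) t]/(block_of g l.+1 t) -t0_def; apply: IH; lia.
apply/ffunP => l; apply/permP => t.
by have := eq_block l.+1 (ltn_ord l) t; rewrite /= !inord_val.
Qed.

Lemma speed_Pclass_grid : m`! ^ L.+1 <= speed (Pclass w H) (L.+2 * m).
Proof.
have -> : L.+2 * m = #|{: cell}| by rewrite card_prod !card_ord.
have <- : #|[set grid_graph g | g in [set: shuffle]]| = m`! ^ L.+1.
  by rewrite card_imset ?cardsT ?card_ffun ?card_Sn ?card_ord //; apply: grid_graph_inj.
apply: subset_leq_card; apply/subsetP => G /imsetP [g _ ->]; rewrite inE.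
apply/asboolP/PclassP; exists (cell_pos g \o enum_val); split=> // [i j|i].
  by move/cell_pos_inj/enum_val_inj.
by rewrite /= /cell_pos; lia.
Qed.

End Grid.

Lemma infix_prefix_offset (A : eqType) (w : nat -> A) (L k j : nat) :
  infix (mkseq (fun i => w i.+1) L) (mkseq (fun i => w (i.+1 + j)) k) ->
  exists a, a + L <= k /\ forall l, l < L -> w (j + a + l.+1) = w l.+1.
Proof.
set f := mkseq _ L; set g := mkseq _ k => f_in_g.
have [size_f size_g] : size f = L /\ size g = k by rewrite !size_mkseq.
move: (f_in_g); rewrite infixE => /eqP take_f.
have fit : infix_index f g + L <= k.
  have := infixTindex f g; rewrite f_in_g size_g.
  have := congr1 size take_f; rewrite size_take size_drop size_f size_g.
  by case: ifP => ? ? ?; lia.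
exists (infix_index f g); split=> // l lt_lL.
have := congr1 (nth (w 0) ^~ l) take_f.
rewrite nth_take ?size_f // nth_drop !nth_mkseq //; last by lia.
by move=> <-; congr w; lia.
Qed.

Lemma almost_periodic_windows (A : eqType) (w : nat -> A) L : almost_periodic w ->
  exists k, forall j, exists a, a + L <= k /\ forall l, l < L -> w (j + a + l.+1) = w l.+1.
Proof.
move=> w_ap; have [k k_ok] : exists k, forall g, factor w g -> k <= size g ->
    infix (mkseq (fun i => w i.+1) L) g.
  by apply: w_ap; exists 0; rewrite size_mkseq; apply: eq_mkseq => i; rewrite addn0.
exists k => j; apply: infix_prefix_offset; apply: k_ok; last by rewrite size_mkseq.
by exists j; rewrite size_mkseq.
Qed.

Lemma speed_Pclass_fact_pow (A : eqType) (w : nat -> A) (H : rel A) L n :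
  almost_periodic w -> (n %/ L.+2)`! ^ L.+1 <= speed (Pclass w H) n.
Proof.
move=> w_ap; have [k windows] := almost_periodic_windows L.+2 w_ap.
have [a a_spec] := choice (fun b => windows (b * k.+2)).
apply: (leq_trans (speed_Pclass_grid H (fun b => (a_spec b).1) (fun b => (a_spec b).2) _)).
apply: (homo_leq leqnn leq_trans (leq_speed_PclassS w H)).
by rewrite mulnC leq_divM.
Qed.

Section BellGrowth.
Local Open Scope R_scope.

Definition bell_growth (s : nat -> nat) : Prop :=
  forall eps, 0 < eps -> exists N : nat, forall n : nat, (N <= n)%N ->
    Rpower (INR n) ((1 - eps) * INR n) <= INR (s n).

Lemma exp_le x y : x <= y -> exp x <= exp y.
Proof. by case/Rle_lt_or_eq_dec => [/exp_increasing|->]; lra. Qed.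

Lemma ln_le x y : 0 < x -> x <= y -> ln x <= ln y.
Proof. by move=> x_gt0; case/Rle_lt_or_eq_dec => [/(ln_increasing _ _ x_gt0)|->]; lra. Qed.

Lemma ln_le_sub1 x : 0 < x -> ln x <= x - 1.
Proof. by move=> x_gt0; have := exp_ineq1_le (ln x); rewrite exp_ln //; lra. Qed.

Lemma exp_pow x n : exp x ^ n = exp (INR n * x).
Proof.
elim: n => [|n IH]; first by rewrite /= Rmult_0_l exp_0.
by rewrite [exp x ^ n.+1]/= IH S_INR -exp_plus; congr exp; lra.
Qed.

Lemma INR_expn m n : INR (m ^ n) = INR m ^ n.
Proof. by elim: n => [|n IH]; rewrite ?expn0 // expnS -multE mult_INR IH. Qed.

Lemma INR_leq m n : (m <= n)%N -> INR m <= INR n.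
Proof. by move/leP; apply: le_INR. Qed.

Lemma INR_gt0 n : (0 < n)%N -> 0 < INR n.
Proof. by move/ltP; apply: lt_0_INR. Qed.

Lemma succ_pow_le m : INR m.+1 ^ m <= exp 1 * INR m ^ m.
Proof.
case: m => [|m]; first by have := exp_ineq1_le 1; rewrite /=; lra.
set x := INR m.+1; have x_gt0 : 0 < x by apply: INR_gt0.
have le_Sx : INR m.+2 <= x * exp (/ x).
  have := exp_ineq1_le (/ x); rewrite [INR m.+2]S_INR -/x => h.
  have -> : x + 1 = x * (1 + / x) by field; lra.
  by apply: Rmult_le_compat_l; lra.
have := pow_incr (INR m.+2) (x * exp (/ x)) m.+1.
rewrite Rpow_mult_distr exp_pow -/x (_ : x * / x = 1); last by field; lra.
move=> pow_le; rewrite Rmult_comm; apply: pow_le.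
by split=> //; have := pos_INR m.+2; lra.
Qed.

Lemma pow_le_exp_fact m : INR m ^ m <= exp (INR m) * INR m`!.
Proof.
elim: m => [|m IH]; first by rewrite /= exp_0; lra.
rewrite factS -multE mult_INR -tech_pow_Rmult S_INR exp_plus -S_INR.
have Sm_gt0 : 0 < INR m.+1 by apply: INR_gt0.
have := Rmult_le_compat_l _ _ _ (Rlt_le _ _ Sm_gt0) (succ_pow_le m).
have := Rmult_le_compat_l (INR m.+1 * exp 1) _ _
  (Rlt_le _ _ (Rmult_lt_0_compat _ _ Sm_gt0 (exp_pos 1))) IH.
nra.
Qed.

Lemma ln_fact_pow_ge L m : (0 < m)%N ->
  INR L.+1 * (INR m * ln (INR m) - INR m) <= ln (INR (m`! ^ L.+1)).
Proof.
move=> m_gt0; have m_pos := INR_gt0 m_gt0.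
have fact_pos : 0 < INR m`! by apply/INR_gt0/fact_gt0.
rewrite INR_expn ln_pow //; apply: Rmult_le_compat_l; first exact: pos_INR.
have := ln_le (pow_lt _ m m_pos) (pow_le_exp_fact m).
by rewrite ln_pow // ln_mult ?ln_exp //; [lra | apply: exp_pos].
Qed.

(* The numeric core: with lx = ln x and ly = ln y <= c + lx, the slack eps * b > 2
   absorbs all lower order terms once lx is large. *)
Lemma bell_exponent_bound b x lx c eps y ly :
  2 <= b -> 2 < eps * b -> 1 <= x -> 0 <= c -> lx <= x ->
  (b - 1) + (b - 2) + 2 * (b - 2) * c <= lx ->
  0 <= y -> y <= b * (x + 1) -> 0 <= ly -> ly <= c + lx ->
  (1 - eps) * (y * ly) <= (b - 1) * (x * lx - x).
Proof.
move=> hb he hx hc hlx hK hy hyb hly hlyc.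
have p1 : 0 <= (b - 2) * (x - lx) by apply: Rmult_le_pos; lra.
have p2 : 0 <= (b - 2) * c * (x - 1) by apply: Rmult_le_pos; [apply: Rmult_le_pos|]; lra.
have p3 : 0 <= x * (lx - ((b - 1) + (b - 2) + 2 * (b - 2) * c)) by apply: Rmult_le_pos; lra.
have h1 : (b - 2) * ((x + 1) * (c + lx)) <= (b - 1) * (x * lx - x) by nra.
have t0 : 0 <= y * ly by apply: Rmult_le_pos.
have h2 : y * ly <= b * (x + 1) * (c + lx).
  apply: Rle_trans (_ : b * (x + 1) * ly <= _); first exact: Rmult_le_compat_r.
  by apply: Rmult_le_compat_l; [apply: Rmult_le_pos|]; lra.
have h3 : b * ((1 - eps) * (y * ly)) <= (b - 2) * (y * ly) by nra.
have h4 : (b - 2) * (y * ly) <= b * ((b - 2) * ((x + 1) * (c + lx))).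
  have -> : b * ((b - 2) * ((x + 1) * (c + lx))) = (b - 2) * (b * (x + 1) * (c + lx)).
    by ring.
  by apply: Rmult_le_compat_l; lra.
apply: (Rmult_le_reg_l b); first lra.
have := Rmult_le_compat_l b _ _ (ltac:(lra) : 0 <= b) h1; lra.
Qed.

Lemma bell_exponent_eventually b eps : 2 <= b -> 2 < eps * b ->
  exists2 X, 0 < X & forall x y, X <= x -> 1 <= y -> y <= b * (x + 1) ->
    y <= 2 * b * x -> (1 - eps) * (y * ln y) <= (b - 1) * (x * ln x - x).
Proof.
move=> hb heb; set c := ln (2 * b).
have hc : 0 <= c by rewrite /c -ln_1; apply: ln_le; lra.
set K0 := (b - 1) + (b - 2) + 2 * (b - 2) * c.
exists (exp K0) => [|x y hX hy hyb hy2]; first exact: exp_pos.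
have x_gt0 : 0 < x by have := exp_pos K0; lra.
have K0_ge0 : 0 <= K0 by rewrite /K0; have := Rmult_le_pos (b - 2) c ltac:(lra) hc; lra.
have hx : 1 <= x by have := exp_ineq1_le K0; lra.
have hK : K0 <= ln x by rewrite -[K0]ln_exp; apply: ln_le => //; apply: exp_pos.
have hlx : ln x <= x by have := ln_le_sub1 x_gt0; lra.
have hly : 0 <= ln y by rewrite -ln_1; apply: ln_le; lra.
have hlyc : ln y <= c + ln x by rewrite /c -ln_mult; [apply: ln_le|..]; lra.
by apply: (bell_exponent_bound hb heb hx hc hlx hK _ hyb hly hlyc); lra.
Qed.

Lemma bell_growth_fact_pow (s : nat -> nat) :
  (forall L n, (n %/ L.+2)`! ^ L.+1 <= s n)%N -> bell_growth s.
Proof.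
move=> s_ge eps eps_gt0.
have [L L_big] := INR_archimed eps 2 eps_gt0.
set b := INR L.+2; have bE : b = INR L.+1 + 1 by rewrite /b S_INR.
have hb : 2 <= b by rewrite bE S_INR; have := pos_INR L; lra.
have heb : 2 < eps * b by rewrite bE S_INR; have := pos_INR L; nra.
have [X X_gt0 X_ok] := bell_exponent_eventually hb heb.
have [M M_big] := INR_archimed 1 X Rlt_0_1.
exists (L.+2 * M)%N => n le_n; set m := (n %/ L.+2)%N.
have le_Mm : (M <= m)%N by rewrite /m -(mulKn M (isT : (0 < L.+2)%N)) leq_div2r.
have X_le : X <= INR m by have := INR_leq le_Mm; lra.
have m_gt0 : (0 < m)%N by rewrite lt0n; apply/eqP => m0; move: X_le; rewrite m0 /=; lra.
have x_ge1 : 1 <= INR m by apply: (INR_leq m_gt0).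
have y_le : INR n <= b * (INR m + 1).
  have := INR_leq (ltnW (ltn_ceil n (isT : (0 < L.+2)%N))).
  by rewrite -/m -multE mult_INR S_INR /b; lra.
have y_ge1 : 1 <= INR n by apply: (INR_leq (leq_trans m_gt0 (leq_div n L.+2))).
have s_ge' : INR (m`! ^ L.+1) <= INR (s n) by apply/INR_leq/s_ge.
have fact_pos : 0 < INR (m`! ^ L.+1) by apply/INR_gt0; rewrite expn_gt0 fact_gt0.
have lnX := X_ok _ _ X_le y_ge1 y_le (ltac:(nra) : INR n <= 2 * b * INR m).
rewrite (_ : b - 1 = INR L.+1) in lnX; last by rewrite bE; ring.
have := ln_fact_pow_ge L m_gt0; have := ln_le fact_pos s_ge'; move=> ln_s ln_fact.
rewrite /Rpower -[X in _ <= X](exp_ln (INR (s n))); last lra.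
by apply: exp_le; lra.
Qed.

Lemma not_bell_growth (s : nat -> nat) (C K : nat) : (0 < K)%N ->
  (forall n, s n <= C ^ n * n ^ (n - n %/ K))%N -> ~ bell_growth s.
Proof.
move=> K_gt0 s_le bell.
have K_pos : 0 < INR K by apply: INR_gt0.
have [N N_ok] := bell (/ (2 * INR K)) ltac:(apply: Rinv_0_lt_compat; lra).
set t := (maxn N (C ^ (2 * K))).+1; set n := (2 * K * t)%N.
have [le_Nt le_tn] : (N <= t /\ t <= n)%N by rewrite /n /t; split; nia.
have := N_ok n (leq_trans le_Nt le_tn).
have -> : (1 - / (2 * INR K)) * INR n = INR (n - t).
  have n_mul : INR n = 2 * INR K * INR t by rewrite /n -!multE !mult_INR.
  by rewrite minus_INR ?n_mul; [field; lra | apply/leP].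
rewrite Rpower_pow; last by apply: INR_gt0; rewrite /n; nia.
rewrite -INR_expn => /INR_le /leP /leq_trans /(_ (s_le n)).
have -> : (n %/ K = 2 * t)%N by rewrite /n mulnAC mulnK.
have -> : (n - t = (n - 2 * t) + t)%N by rewrite /n; nia.
have -> : (C ^ n = (C ^ (2 * K)) ^ t)%N by rewrite /n expnM.
rewrite expnD [(n ^ (n - 2 * t) * _)%N]mulnC.
rewrite leq_pmul2r ?expn_gt0 ?(leq_trans _ le_tn) // leqNgt ltn_exp2r //.
by move/negP; apply; apply: leq_trans le_tn; rewrite /t ltnS leq_maxr.
Qed.

End BellGrowth.

Fixpoint run_len (P : pred nat) (p : nat) : nat :=
  if p is p'.+1 then (if P p' then (run_len P p').+1 else 0) else 0.

Lemma run_len_le (P : pred nat) p : run_len P p <= p.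
Proof. by elim: p => //= p IH; case: (P p). Qed.

Lemma run_len_mem (P : pred nat) p t : t <= run_len P p -> P p -> P (p - t).
Proof.
elim: p t => [|p IH] [|t] //=; rewrite ?subn0 //.
by case Pp: (P p) => //; rewrite ltnS subSS => /IH ->.
Qed.

Lemma run_len_start (P : pred nat) p : run_len P (p - run_len P p) = 0.
Proof.
elim: p => //= p IH; case Pp: (P p); first by rewrite subSS.
by rewrite subn0 /= Pp.
Qed.

Lemma run_lenS (P : pred nat) p : P p -> run_len P p.+1 = (run_len P p).+1.
Proof. by move=> /= ->. Qed.

Lemma leq_pexp_sub N a b : b <= a -> N ^ (N - a) <= N ^ (N - b).
Proof. by case: N => [|N] le_ba; rewrite ?sub0n // leq_pexp2l //; lia. Qed.

(* A graph G_{w,H}(x) whose runs of consecutive labels are shorter than K is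
   determined by the letters, the offset of each vertex in its run, and the
   idempotent map sending each vertex to the first vertex of its run; the image
   of that map has one vertex per run, hence at least n/K of them. *)
Section RunCode.
Variables (A : finType) (H : rel A) (K n : nat).

Definition run_code :=
  ({ffun 'I_n -> A} * {ffun 'I_n -> 'I_K} * {ffun 'I_n -> 'I_n})%type.

Definition decode (e : run_code) : graph n :=
  let: (letter, offset, root) := e in
  [ffun i => [ffun j => (i != j) &&
     (if (root i == root j) &&
         ((val (offset i) == (offset j).+1) || (val (offset j) == (offset i).+1))
      then ~~ H (letter i) (letter j) else H (letter i) (letter j))]].

Definition idempotentb (f : {ffun 'I_n -> 'I_n}) := [forall i, f (f i) == f i].

Definition run_roots := [set f : {ffun 'I_n -> 'I_n} |
  idempotentb f && (n <= K * #|[set f i | i in 'I_n]|)].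

Section Encode.
Variables (w : nat -> A) (x : 'I_n -> nat).
Hypothesis x_inj : injective x.
Hypothesis short_runs : forall i, run_len (imagep x) (x i) < K.

Let start i := x i - run_len (imagep x) (x i).

Definition run_root i : 'I_n := odflt i [pick j | x j == start i].

Lemma x_run_root i : x (run_root i) = start i.
Proof.
rewrite /run_root; case: pickP => [j /eqP //|none].
have /existsP [j /eqP j_start] : imagep x (start i).
  by apply: run_len_mem => //; apply/existsP; exists i.
by have := none j; rewrite j_start eqxx.
Qed.

Lemma run_root_idem i : run_root (run_root i) = run_root i.
Proof. by apply: x_inj; rewrite !x_run_root /start x_run_root run_len_start subn0. Qed.

Lemma x_succE i j : (x j == (x i).+1) =
  (run_root i == run_root j) &&
  (run_len (imagep x) (x j) == (run_len (imagep x) (x i)).+1).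
Proof.
have img_i : imagep x (x i) by apply/existsP; exists i.
have := run_len_le (imagep x) (x i); have := run_len_le (imagep x) (x j).
move=> le_j le_i; apply/eqP/andP => [e|[/eqP eq_root /eqP e_len]].
  have e_len : run_len (imagep x) (x j) = (run_len (imagep x) (x i)).+1.
    by rewrite e run_lenS.
  split; last by rewrite e_len.
  by apply/eqP/x_inj; rewrite !x_run_root /start e_len e; lia.
by have := congr1 x eq_root; rewrite !x_run_root /start e_len; lia.
Qed.

Definition encode : run_code :=
  ([ffun i => w (x i)], [ffun i => Ordinal (short_runs i)], [ffun i => run_root i]).

Lemma decode_encode : decode encode = GwH w H x.
Proof.
apply/ffunP => i; apply/ffunP => j; rewrite !ffunE /=.
case: (i =P j) => //= _.
by rewrite (x_succE j i) (x_succE i j) (eq_sym (run_root j)); case: (_ == _).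
Qed.

Lemma encode_root_in : encode.2 \in run_roots.
Proof.
rewrite inE; apply/andP; split; first by apply/forallP => i; rewrite !ffunE run_root_idem.
pose g i := (run_root i, Ordinal (short_runs i)).
have g_inj : injective g.
  move=> i j [eq_root eq_len]; apply: x_inj.
  have := congr1 x eq_root; rewrite !x_run_root /start eq_len.
  by have := run_len_le (imagep x) (x i); have := run_len_le (imagep x) (x j); lia.
have : #|[set g i | i in 'I_n]| <= #|setX [set encode.2 i | i in 'I_n] [set: 'I_K]|.
  apply: subset_leq_card; apply/subsetP => _ /imsetP [i _ ->].
  by rewrite inE /= in_setT andbT; apply/imsetP; exists i; rewrite ?ffunE.
by rewrite card_imset // cardsX cardsT !card_ord mulnC.
Qed.

End Encode.

Lemma card_run_roots_image (R : {set 'I_n}) :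
  #|[set f in run_roots | [set f i | i in 'I_n] == R]| <= n ^ (n - #|R|).
Proof.
pose restr (f : {ffun 'I_n -> 'I_n}) : {ffun {i | i \in ~: R} -> 'I_n} :=
  [ffun i => f (val i)].
have fixR f i : idempotentb f -> i \in [set f j | j in 'I_n] -> f i = i.
  by move=> f_idem /imsetP [j _ ->]; apply/eqP; apply: (forallP f_idem).
have restr_inj : {in [set f in run_roots | [set f i | i in 'I_n] == R] &, injective restr}.
  move=> f f'; rewrite !inE => /andP [/andP [f_idem _] /eqP fR] /andP [/andP [f'_idem _] /eqP f'R] e.
  apply/ffunP => i; case: (boolP (i \in R)) => iR; first by rewrite fixR ?fR // fixR ?f'R.
  have iC : i \in ~: R by rewrite inE.
  by have := congr1 (fun F : {ffun _ -> _} => F (exist _ i iC)) e; rewrite !ffunE.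
rewrite -(card_in_imset restr_inj); apply: leq_trans (max_card _) _.
rewrite card_ffun card_ord card_sig (_ : #|[pred i in ~: R]| = #|~: R|); last exact: eq_card.
by have -> : #|~: R| = n - #|R| by have := cardsC R; rewrite card_ord; lia.
Qed.

Lemma card_run_roots : 0 < K -> #|run_roots| <= 2 ^ n * n ^ (n - n %/ K).
Proof.
move=> K_gt0; rewrite -sum1_card.
rewrite (partition_big (fun f : {ffun 'I_n -> 'I_n} => [set f i | i in 'I_n]) predT) //=.
have <- : #|{: {set 'I_n}}| = 2 ^ n.
  by rewrite -cardsT -powersetT card_powerset cardsT card_ord.
rewrite -sum_nat_const; apply: leq_sum => R _; rewrite sum1_card.
set F := [set f in run_roots | [set f i | i in 'I_n] == R].
rewrite (_ : #|_| = #|F|); last by apply: eq_card => f; rewrite inE unfold_in.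
have [->|[f]] := set_0Vmem F; first by rewrite cards0.
rewrite !inE => /andP [/andP [_ le_nK] /eqP fR]; apply: leq_trans (card_run_roots_image R) _.
by apply: leq_pexp_sub; rewrite -fR -(mulKn #|_| K_gt0) leq_div2r.
Qed.

End RunCode.

Lemma speed_short_runs (A : finType) (w : nat -> A) (H : rel A) K n (Y : gclass) :
  0 < K ->
  (forall g : graph n, Y n g -> exists x : 'I_n -> nat,
     [/\ injective x, forall i, run_len (imagep x) (x i) < K & g = GwH w H x]) ->
  speed Y n <= (#|A| * K * 2) ^ n * n ^ (n - n %/ K).
Proof.
move=> K_gt0 Y_short.
pose codes := setX [set: {ffun 'I_n -> A} * {ffun 'I_n -> 'I_K}] (run_roots K n).
apply: (@leq_trans #|[set decode H e | e in codes]|).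
  apply/subset_leq_card/subsetP => g; rewrite inE => /asboolP /Y_short [x [x_inj x_short ->]].
  apply/imsetP; exists (encode w x_short); last by rewrite decode_encode.
  by rewrite inE in_setT (encode_root_in w x_inj).
apply: leq_trans (leq_imset_card _ _) _.
rewrite cardsX cardsT card_prod !card_ffun !card_ord !expnMn -!mulnA !leq_mul2l.
by rewrite card_run_roots ?orbT.
Qed.

(* A run of length K contains a window of the word holding a translate of the
   positions u0, which would put G_{w,H}(u0) into Y. *)
Lemma short_runs (A : eqType) (w : nat -> A) (H : rel A) (Y : gclass)
    n0 (u0 : 'I_n0 -> nat) :
  almost_periodic w -> hereditary Y -> subclass Y (Pclass w H) ->
  injective u0 -> (forall i, 0 < u0 i) -> ~ Y n0 (GwH w H u0) ->
  exists2 K, 0 < K & forall n (g : graph n), Y n g -> exists x : 'I_n -> nat,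
    [/\ injective x, forall i, run_len (imagep x) (x i) < K & g = GwH w H x].
Proof.
move=> w_ap Y_hered YP u0_inj u0_pos not_Y.
have [k windows] := almost_periodic_windows (\max_(i < n0) u0 i) w_ap.
exists k.+1 => // n g Yg; have [x [x_inj _ g_def]] := (PclassP w H g).1 (YP _ _ Yg).
exists x; split=> // i; rewrite ltnNge; apply/negP => long_run.
have [a [a_fit a_occ]] := windows (x i - k).
have u0_le i' : 0 < u0 i' <= \max_(i < n0) u0 i by rewrite u0_pos leq_bigmax.
have le_run := run_len_le (imagep x) (x i).
have in_run i' : imagep x (x i - k + a + u0 i').
  have -> : x i - k + a + u0 i' = x i - (x i - (x i - k + a + u0 i')).
    by have := u0_le i'; lia.
  by apply: run_len_mem; [have := u0_le i'; lia | apply/existsP; exists i].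
have shift_inj : injective (fun i' => x i - k + a + u0 i') by move=> i1 i2 /addnI /u0_inj.
have [f [f_inj sub_f]] := GwH_sub_image w H shift_inj in_run.
apply: not_Y; rewrite -(GwH_shift H (d := x i - k + a)).
  by rewrite sub_f -g_def; apply: Y_hered.2 f_inj Yg.
move=> i'; rewrite -(prednK (u0_pos i')) a_occ //.
by have := u0_le i'; lia.
Qed.

Theorem theorem3p10 (A : finType) (w : nat -> A) (H : rel A) :
  symmetric H -> almost_periodic w -> minimal_above_bell (Pclass w H).
Proof.
move=> H_sym w_ap; split; [exact: Pclass_hereditary | split].
  by apply: bell_growth_fact_pow => L n; apply: speed_Pclass_fact_pow.
move=> Y Y_hered YP Y_bell n g Pg; case: (pselect (Y n g)) => // not_Yg.
have [u0 [u0_inj u0_pos g_def]] := (PclassP w H g).1 Pg; subst g.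
have [K K_gt0 Y_short] := short_runs w_ap Y_hered YP u0_inj u0_pos not_Yg.
case: (not_bell_growth K_gt0 (fun m => speed_short_runs K_gt0 (Y_short m)) Y_bell).
Qed.
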